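(* Let $L\ge1$, $\boldsymbol{W}\in\mathbb{R}^{n\times d}$, $\boldsymbol{\alpha}_\ell\in\mathbb{R}^n$ ($\ell=1,\dots,L$), $\boldsymbol{\beta}_\ell\in\mathbb{R}^n$ and $\boldsymbol{b}_\ell\in\mathbb{R}^n$ ($\ell=0,\dots,L-1$), $\boldsymbol{b}_L\in\mathbb{R}^d$, and let $\sigma_1,\dots,\sigma_L:\mathbb{R}^n\to\mathbb{R}^n$ be differentiable elementwise activations. Define $$\boldsymbol{z}_0=\boldsymbol{\beta}_0\odot\boldsymbol{W}\boldsymbol{x}+\boldsymbol{b}_0,\qquad \boldsymbol{z}_\ell=\boldsymbol{\beta}_\ell\odot\boldsymbol{W}\boldsymbol{x}+\boldsymbol{\alpha}_\ell\odot\sigma_\ell(\boldsymbol{z}_{\ell-1})+\boldsymbol{b}_\ell\ (1\le\ell\le L-1),$$ $$\mathrm{GradNetC}(\boldsymbol{x})=\boldsymbol{W}^\top[\boldsymbol{\alpha}_L\odot\sigma_L(\boldsymbol{z}_{L-1})]+\boldsymbol{b}_L .$$ Then $\mathrm{GradNetC}=\nabla F$ for some $F\in C^1(\mathbb{R}^d)$, i.e. it is a GradNet.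
   Context: $\odot$ is the entrywise (Hadamard) product. An elementwise activation $\sigma:\mathbb{R}^n\to\mathbb{R}^n$ has the form $\sigma(\boldsymbol{z})=(s_1(z_1),\dots,s_n(z_n))$ with scalar functions $s_j$. A GradNet is a function $f:\mathbb{R}^d\to\mathbb{R}^d$ with $f=\nabla F$ for some continuously differentiable $F:\mathbb{R}^d\to\mathbb{R}$. *)

From HB Require Import structures.
From mathcomp Require Import all_boot all_order all_algebra.
From mathcomp Require Import all_classical all_reals all_analysis.
Set Implicit Arguments. Unset Strict Implicit. Unset Printing Implicit Defensive.
Import Order.TTheory GRing.Theory Num.Theory.
Import numFieldNormedType.Exports.
Local Open Scope ring_scope.

Definition hadamard (R : realType) (k : nat) (u v : 'cV[R]_k) : 'cV[R]_k :=
  \col_i (u i 0 * v i 0).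

Definition elementwise (R : realType) (k : nat) (s : 'I_k -> R -> R)
  (z : 'cV[R]_k) : 'cV[R]_k := \col_j s j (z j 0).

Definition gradient (R : realType) (d : nat) (F : 'cV[R]_d -> R)
  (x : 'cV[R]_d) : 'cV[R]_d :=
  \col_i ('d F x) (delta_mx i 0).

Definition C1 (R : realType) (d : nat) (F : 'cV[R]_d -> R) : Prop :=
  (forall x, differentiable F x) /\ continuous (gradient F).

Definition is_GradNet (R : realType) (d : nat) (f : 'cV[R]_d -> 'cV[R]_d)
  : Prop :=
  exists F : 'cV[R]_d -> R, C1 F /\ gradient F = f.

Fixpoint zlayer (R : realType) (n d : nat) (W : 'M[R]_(n, d))
  (alpha beta b : nat -> 'cV[R]_n) (sigma : nat -> 'I_n -> R -> R)
  (l : nat) (x : 'cV[R]_d) : 'cV[R]_n :=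
  match l with
  | 0 => hadamard (beta 0%N) (W *m x) + b 0%N
  | l'.+1 => hadamard (beta l) (W *m x)
             + hadamard (alpha l)
                 (elementwise (sigma l) (zlayer W alpha beta b sigma l' x))
             + b l
  end.

Definition GradNetC (R : realType) (n d L : nat) (W : 'M[R]_(n, d))
  (alpha beta b : nat -> 'cV[R]_n) (bL : 'cV[R]_d)
  (sigma : nat -> 'I_n -> R -> R) (x : 'cV[R]_d) : 'cV[R]_d :=
  W^T *m hadamard (alpha L)
           (elementwise (sigma L) (zlayer W alpha beta b sigma L.-1 x)) + bL.

From HB Require Import structures.
From mathcomp Require Import all_boot all_order all_algebra.
From mathcomp Require Import all_classical all_reals all_analysis.
Import Order.TTheory GRing.Theory Num.Theory.
Import numFieldNormedType.Exports.
Local Open Scope ring_scope.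

(* Unit j of every hidden layer sees x only through (W x)_j, because the skip
   connections, biases and activations all act entrywise.  Hence
   GradNetC x = W^T h(W x) + b_L for continuous scalar functions h_j, which is
   the gradient of F x = sum_j H_j((W x)_j) + <b_L, x> with H_j an
   antiderivative of h_j given by the fundamental theorem of calculus. *)

Section antiderivative.
Context {R : realType}.
Notation mu := (@lebesgue_measure R).
Variable f : R -> R.
Hypothesis f_cont : continuous f.
Local Notation I a x := (parameterized_integral mu a x f).

Let integrable_itv a b : mu.-integrable `[a, b] (EFin \o f).
Proof.
apply: continuous_compact_integrable; first exact: segment_compact.
exact: continuous_subspaceT.
Qed.

Lemma parameterized_integral_split a c x : a <= c -> c <= x ->
  I a x = I a c + I c x.
Proof.
move=> ac cx; apply/eqP; rewrite addrC -subr_eq; apply/eqP.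
have := @Rintegral_itvB R f (BLeft a) (BRight x) c (integrable_itv a x).
rewrite !bnd_simp => /(_ ac cx) ->.
rewrite Rintegral_itv_obnd_cbnd //.
apply: integrableS (integrable_itv c x) => //.
by apply: subset_itvr; rewrite bnd_simp.
Qed.

(* The base point moves with x so as to stay below both x and 0. *)
Definition antiderivative (x : R) : R :=
  I (Num.min x 0 - 1) x - I (Num.min x 0 - 1) 0.

Lemma antiderivativeE a x : a <= Num.min x 0 ->
  antiderivative x = I a x - I a 0.
Proof.
have base_shift b c y : b <= c -> c <= y -> c <= 0 ->
    I b y - I b 0 = I c y - I c 0.
  move=> bc cy c0.
  rewrite (parameterized_integral_split _ _ _ bc cy).
  rewrite (parameterized_integral_split _ _ _ bc c0).
  by rewrite opprD addrACA subrr add0r.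
rewrite /antiderivative; set m := Num.min x 0 - 1.
have : m <= Num.min x 0 by rewrite /m lerBlDr lerDl.
rewrite !le_min => /andP[mx m0] /andP[ax a0].
by have [am|/ltW ma] := leP a m; [apply/esym/base_shift|apply: base_shift].
Qed.

Lemma is_derive_antiderivative (x : R) : is_derive x 1 antiderivative (f x).
Proof.
pose a := Num.min x 0 - 1.
have : a < Num.min x 0 by rewrite /a ltrBlDr ltrDl.
rewrite lt_min => /andP[ax a0].
have x1 : x < x + 1 by rewrite ltrDl.
have [dI I'x] :=
  continuous_FTC1_closed x1 (integrable_itv a (x + 1)) ax (f_cont x).
have dIx : is_derive x 1 (fun y => I a y) (f x).
  by apply: DeriveDef; [exact: dI|rewrite -derive1E].
have dG : is_derive x 1 ((fun y => I a y) - cst (I a 0)) (f x - 0).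
  exact: is_deriveB.
rewrite -[f x]subr0; apply: near_eq_is_derive dG; near=> y.
apply/esym/antiderivativeE; rewrite le_min (ltW a0) andbT.
by apply: ltW; near: y; exact: lt_nbhsr.
Unshelve. all: by end_near. Qed.

Lemma is_diff_antiderivative (x : R) :
  is_diff x antiderivative ( *:%R^~ (f x)).
Proof.
have [dx d'x] := is_derive_antiderivative x.
have dfx : differentiable antiderivative x by apply/derivable1_diffP.
by apply: DiffDef => //; rewrite diff1E // derive1E d'x.
Qed.

End antiderivative.

Section matrix_calculus.
Context {R : realType}.

Lemma continuous_mx {T : topologicalType} {m k} (F : T -> 'M[R]_(m, k)) :
  (forall i j, continuous (fun t => F t i j)) -> continuous F.
Proof.
move=> F_cont t A /nbhs_ballP[e /= e0 eA].
have : \forall s \near t, forall ij : 'I_m * 'I_k,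
    ball (F t ij.1 ij.2) e (F s ij.1 ij.2).
  by apply: filter_forall => -[i j]; apply: F_cont; exact: nbhsx_ballx.
by apply: filterS => s Fs; apply: eA; split => // i j; exact: (Fs (i, j)).
Qed.

Lemma continuous_mulmx {m k p} (A : 'M[R]_(m, k)) :
  continuous (fun M : 'M[R]_(k, p) => A *m M).
Proof.
apply: continuous_mx => i j.
have -> : (fun M : 'M[R]_(k, p) => (A *m M) i j) =
    (fun M => \sum_l A i l * M l j) by apply/funext => M; rewrite mxE.
apply: continuous_big => [|l _ M]; first exact: add_continuous.
by apply: continuousM; [exact: cst_continuous|exact: coord_continuous].
Qed.

Lemma is_diff_mulmx {m k p} (A : 'M[R]_(m, k)) (M : 'M[R]_(k, p)) :
  is_diff M (mulmx A) (mulmx A).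
Proof.
apply: DiffDef; first exact/linear_differentiable/continuous_mulmx.
by rewrite diff_lin //; exact: continuous_mulmx.
Qed.

Lemma is_diff_coord {m k} (M : 'M[R]_(m, k)) i j :
  is_diff M (fun N => N i j) (fun N => N i j).
Proof.
have coord_lin : linear (fun N : 'M[R]_(m, k) => N i j).
  by move=> a N N'; rewrite !mxE.
pose coord : {linear 'M[R]_(m, k) -> R} :=
  HB.pack (fun N : 'M[R]_(m, k) => N i j)
    (GRing.isLinear.Build _ _ _ _ _ coord_lin).
apply: DiffDef; first exact: differentiable_coord.
by have := @diff_lin R _ _ coord M (@coord_continuous R m k i j).
Qed.

Lemma is_diff_sum {V W : normedModType R} {n} {f df : 'I_n -> V -> W} {x} :
  (forall i, is_diff x (f i) (df i)) ->
  is_diff x (fun y => \sum_(i < n) f i y) (fun v => \sum_(i < n) df i v).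
Proof.
move=> f_diff; rewrite -!fct_sumE.
elim/big_ind2: _ => // [|g dg g' dg' *]; first exact: is_diff_cst.
exact: is_diffD.
Qed.

End matrix_calculus.

Section ridge_gradnet.
Context {R : realType} {n d : nat}.
Variables (A : 'M[R]_(n, d)) (h : 'I_n -> R -> R) (c : 'cV[R]_d).
Hypothesis h_cont : forall j, continuous (h j).

Definition ridge_map (x : 'cV[R]_d) : 'cV[R]_d :=
  A^T *m \col_j h j ((A *m x) j 0) + c.

Definition ridge_potential (x : 'cV[R]_d) : R :=
  \sum_j antiderivative (h j) ((A *m x) j 0) + (c^T *m x) 0 0.

Lemma is_diff_ridge_potential x : is_diff x ridge_potential
  (fun v => \sum_j (A *m v) j 0 *: h j ((A *m x) j 0) + (c^T *m v) 0 0).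
Proof.
have ridge_diff j : is_diff x
    (antiderivative (h j) \o (fun z : 'cV[R]_n => z j 0) \o mulmx A)
    (( *:%R^~ (h j ((A *m x) j 0))) \o (fun z : 'cV[R]_n => z j 0) \o mulmx A).
  apply: is_diff_comp (is_diff_mulmx A x)
    (is_diff_comp (is_diff_coord _ j 0) _).
  exact: is_diff_antiderivative (h_cont j) _.
by have := is_diffD (is_diff_sum ridge_diff)
  (is_diff_comp (is_diff_mulmx c^T x) (is_diff_coord (c^T *m x) 0 0)).
Qed.

Lemma gradient_ridge_potential : gradient ridge_potential = ridge_map.
Proof.
apply/funext => x; apply/matrixP => i k; rewrite ord1 !mxE.
have dF := is_diff_ridge_potential x.
rewrite diff_val -!colE !mxE; congr (_ + _).
by apply: eq_bigr => j _; rewrite !mxE.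
Qed.

Lemma continuous_ridge_map : continuous ridge_map.
Proof.
have col_cont : continuous (fun x : 'cV[R]_d => \col_j h j ((A *m x) j 0)).
  apply: continuous_mx => j k x; rewrite ord1.
  under eq_fun do rewrite mxE.
  apply: continuous_comp (h_cont j _).
  exact: continuous_comp (continuous_mulmx A x) (@coord_continuous R n 1 j 0 _).
move=> x; apply: (@continuousD _ _ _
  (fun x => A^T *m \col_j h j ((A *m x) j 0)) (cst c)).
  exact: continuous_comp (col_cont x) (continuous_mulmx A^T _).
exact: cst_continuous.
Qed.

Lemma ridge_map_is_GradNet : is_GradNet ridge_map.
Proof.
exists ridge_potential; split; last exact: gradient_ridge_potential.
split; last by rewrite gradient_ridge_potential; exact: continuous_ridge_map.
by move=> x; have [] := is_diff_ridge_potential x.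
Qed.

End ridge_gradnet.

Section gradnetc_ridge.
Context {R : realType} {n d : nat}.
Variables (W : 'M[R]_(n, d)) (alpha beta b : nat -> 'cV[R]_n)
  (sigma : nat -> 'I_n -> R -> R).

Fixpoint zunit (l : nat) (j : 'I_n) (t : R) : R :=
  match l with
  | 0 => beta 0%N j 0 * t + b 0%N j 0
  | l'.+1 => beta l j 0 * t + alpha l j 0 * sigma l j (zunit l' j t) + b l j 0
  end.

Lemma continuous_zunit l j :
  (forall k, (0 < k <= l)%N -> continuous (sigma k j)) ->
  continuous (zunit l j).
Proof.
have linear_add_cont a (g : R -> R) :
    continuous g -> continuous ((fun t => a * t) + g).
  move=> g_cont t; apply: continuousD; last exact: g_cont.
  by apply: continuousM; [exact: cst_continuous|exact: cvg_id].
elim: l => [|l IHl] sigma_cont.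
  exact: linear_add_cont (@cst_continuous _ _ (b 0 j 0)).
have sigma_zunit_cont :
    continuous (fun t => alpha l.+1 j 0 * sigma l.+1 j (zunit l j t)).
  move=> t; apply: continuousM; first exact: cst_continuous.
  apply: (@continuous_comp _ _ _ (zunit l j) (sigma l.+1 j)).
    apply: IHl => k /andP[k0 kl]; apply: sigma_cont.
    by rewrite k0 (leq_trans kl).
  by apply: sigma_cont; rewrite /= leqnn.
by move=> t; have := continuousD
  (linear_add_cont (beta l.+1 j 0) _ sigma_zunit_cont t)
  (@cst_continuous _ _ (b l.+1 j 0) t).
Qed.

Lemma zlayerE l x j :
  zlayer W alpha beta b sigma l x j 0 = zunit l j ((W *m x) j 0).
Proof. by elim: l => [|l IHl] /=; rewrite !mxE // IHl mxE. Qed.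

Lemma GradNetC_ridge L bL : GradNetC L W alpha beta b bL sigma =
  ridge_map W (fun j t => alpha L j 0 * sigma L j (zunit L.-1 j t)) bL.
Proof.
apply/funext => x; congr (_ *m _ + _); apply/matrixP => j k.
by rewrite ord1 !mxE zlayerE mxE.
Qed.

End gradnetc_ridge.

Theorem theorem8 (R : realType) (n d L : nat) (W : 'M[R]_(n, d))
  (alpha beta b : nat -> 'cV[R]_n) (bL : 'cV[R]_d)
  (sigma : nat -> 'I_n -> R -> R) :
  (1 <= L)%N ->
  (forall l j t, (1 <= l <= L)%N -> differentiable (sigma l j) t) ->
  is_GradNet (GradNetC L W alpha beta b bL sigma).
Proof.
move=> L_gt0 sigma_diff; rewrite GradNetC_ridge.
apply: ridge_map_is_GradNet => j.
have sigma_cont l : (0 < l <= L)%N -> continuous (sigma l j).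
  by move=> lL t; apply: differentiable_continuous; exact: sigma_diff.
move=> t; apply: continuousM; first exact: cst_continuous.
apply: (@continuous_comp _ _ _ (zunit _ _ _ _ L.-1 j) (sigma L j)).
  apply: continuous_zunit => k /andP[k_gt0 kL]; apply: sigma_cont.
  by rewrite k_gt0 (leq_trans kL) // leq_pred.
by apply: sigma_cont; rewrite L_gt0 leqnn.
Qed.
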